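(* Let $V$ be a finite set, $\{C_\alpha\}$ a partition of $V$, and ${\bf t}=(t_i)_{i\in V}$, $\{\lambda_\alpha\}$ complex numbers. Then $$\int\mathcal{D}_{V,{\bf t}}(\psi,\bar\psi)\prod_\alpha f_{C_\alpha}^{(\lambda_\alpha)}=\prod_\alpha\Big(\lambda_\alpha+\sum_{i\in C_\alpha}(t_i-\lambda_\alpha)\Big).$$
   Context: For each $i\in V$ let $\psi_i,\bar\psi_i$ be anticommuting generators of a Grassmann algebra over $\mathbb{C}$; $\tau_A=\prod_{i\in A}\bar\psi_i\psi_i$ ($\tau_\emptyset=1$); $f_A^{(\lambda)}=\lambda(1-|A|)\tau_A+\sum_{i\in A}\tau_{A\setminus\{i\}}-\sum_{i,j\in A,\ i\neq j}\bar\psi_i\psi_j\,\tau_{A\setminus\{i,j\}}$. $\mathcal{D}_{V,{\bf t}}(\psi,\bar\psi)=\prod_{i\in V}d\psi_i\,d\bar\psi_i\,e^{t_i\bar\psi_i\psi_i}$, with Berezin conventions $\int d\psi_i\,d\bar\psi_i\,\bar\psi_i\psi_i=1$ and the integral of $1,\psi_i,\bar\psi_i$ equal to $0$. *)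

From mathcomp Require Import all_boot all_order all_algebra complex.
From mathcomp Require Import reals.

Set Implicit Arguments.
Unset Strict Implicit.
Unset Printing Implicit Defensive.

Import Order.TTheory GRing.Theory Num.Theory.
Local Open Scope ring_scope.

(* Grassmann algebra over C = R[i] with generators psi_i (= inl i) and
   psibar_i (= inr i), i in V.  An element is its coefficient family on the
   monomials; the monomial attached to S : {set gen V} is the product of the
   generators of S taken in increasing order of [enum_rank]. *)

Section Grassmann.
Variable R : realType.
Variable V : finType.

Definition gen := (V + V)%type.
Definition grass := {ffun {set gen} -> R[i]}.

Definition grank (g : gen) : nat := enum_rank g.

(* sign of reordering  m_A * m_B  into  m_(A :|: B)  (A, B disjoint) *)
Definition msign (A B : {set gen}) : R[i] :=
  (-1) ^+ #|[set p in setX A B | (grank p.2 < grank p.1)%N]|.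

Definition gmul (x y : grass) : grass :=
  [ffun S => \sum_(A : {set gen}) \sum_(B : {set gen})
      (if (A :&: B == set0) && (A :|: B == S) then msign A B * x A * y B
       else 0)].

Definition gconst (c : R[i]) : grass := [ffun S => if S == set0 then c else 0].
Definition gone : grass := gconst 1.
Definition ggen (g : gen) : grass := [ffun S => (S == [set g])%:R].
Definition psi (i : V) : grass := ggen (inl i).
Definition psib (i : V) : grass := ggen (inr i).

Definition gpow (x : grass) (k : nat) : grass := iter k (gmul x) gone.

(* exponential of a Grassmann element without body (nilpotent): the series
   terminates since monomials have degree at most #|gen|. *)
Definition gexp (x : grass) : grass :=
  \sum_(k < #|{: gen}|.+1) (k`!%:R)^-1 *: gpow x k.

(* left derivative d/d g ; Berezin integration  \int d g  is d/d g,
   so that \int dpsi_i dpsibar_i psibar_i psi_i = 1. *)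
Definition dleft (g : gen) (x : grass) : grass :=
  [ffun S : {set gen} => if g \in S then 0
             else (-1) ^+ #|[set a in S | (grank a < grank g)%N]| * x (g |: S)].

(* \int prod_(i in V) dpsi_i dpsibar_i  F  (pairs taken in enum order) *)
Definition berezin (F : grass) : grass :=
  foldr (fun i acc => dleft (inl i) (dleft (inr i) acc)) F (enum V).

Definition tau (A : {set V}) : grass :=
  foldr (fun i acc => gmul (gmul (psib i) (psi i)) acc) gone (enum A).

Definition fA (lam : R[i]) (A : {set V}) : grass :=
  (lam * (1 - (#|A|)%:R)) *: tau A
  + \sum_(i in A) tau (A :\ i)
  - \sum_(i in A) \sum_(j in A | j != i)
       gmul (gmul (psib i) (psi j)) (tau (A :\ i :\ j)).

Definition DInt (t : V -> R[i]) (F : grass) : grass :=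
  berezin (gmul (foldr (fun i acc =>
                    gmul (gexp (t i *: gmul (psib i) (psi i))) acc)
                  gone (enum V)) F).

Definition blockprod (P : {set {set V}}) (lam : {set V} -> R[i]) : grass :=
  foldr (fun C acc => gmul (fA (lam C) C) acc) gone (enum P).

End Grassmann.

(* Every factor of the integrand is even, hence central, so the integrand regroups block by
   block as the product over the blocks C of E_C f_C, where
   E_C = prod_(i in C) e^(t_i tau_i) = prod_(i in C) (1 + t_i tau_i).
   The Berezin integral only reads the coefficient of the top monomial, normalised by
   int tau_V = 1, and since distinct blocks involve disjoint generators that coefficient
   factors over the blocks. Inside a block, 1 + t_i tau_i fixes every term containing psi_i or
   psibar_i: so E_C fixes tau_C and the hopping terms psibar_i psi_j tau_(C-i-j), which miss
   psi_i and never reach the top monomial, while it turns tau_(C-i) into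
   tau_(C-i) + t_i tau_C. The top coefficient of E_C f_C is therefore
   lambda (1 - |C|) + sum_(i in C) t_i = lambda + sum_(i in C) (t_i - lambda). *)

From mathcomp Require Import all_boot all_order all_algebra complex.
From mathcomp Require Import reals ring.
Import GRing.Theory.
Local Open Scope ring_scope.

Set Implicit Arguments.
Unset Strict Implicit.
Unset Printing Implicit Defensive.

Section Grassmann.
Variables (R : realType) (V : finType).

Local Notation gen := (gen V).
Local Notation grass := (grass R V).
Local Notation gone := (@gone R V).
Local Notation gmul := (@gmul R V).
Local Notation msign := (@msign R V).
Local Notation ggen := (@ggen R V).
Local Notation gconst := (@gconst R V).
Local Notation psi := (@psi R V).
Local Notation psib := (@psib R V).
Local Notation tau := (@tau R V).

Implicit Types (x y z : grass) (A B C S X Y : {set gen}).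

Lemma gmulE x y S : gmul x y S = \sum_A \sum_B
  (if (A :&: B == set0) && (A :|: B == S) then msign A B * x A * y B else 0).
Proof. by rewrite ffunE. Qed.

Lemma goneE S : gone S = if S == set0 then 1 else 0.
Proof. by rewrite ffunE. Qed.

Lemma gaddE x y S : (x + y) S = x S + y S.
Proof. by rewrite ffunE. Qed.

Lemma gsubE x y S : (x - y) S = x S - y S.
Proof. by rewrite !ffunE. Qed.

Lemma gscaleE a x S : (a *: x) S = a * x S.
Proof. by rewrite ffunE. Qed.

Lemma grank_inj : injective (@grank V).
Proof. by move=> a b /val_inj/enum_rank_inj. Qed.

Lemma cards_disjU (T : finType) (D E : {set T}) :
  D :&: E = set0 -> #|D :|: E| = (#|D| + #|E|)%N.
Proof. by move=> DE; rewrite cardsU DE cards0 subn0. Qed.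

Lemma setUD_subset A S : A \subset S -> A :|: (S :\: A) = S.
Proof. by move=> AS; rewrite -{1}(setIidPr AS) setID. Qed.

(** * The Grassmann product *)

Lemma gmulDl x y z : gmul (y + z) x = gmul y x + gmul z x.
Proof.
apply/ffunP=> S; rewrite !ffunE -big_split /=; apply: eq_bigr => A _.
rewrite -big_split /=; apply: eq_bigr => B _; rewrite ffunE.
by case: ifP; rewrite ?addr0 // mulrDr mulrDl.
Qed.

Lemma gmulDr x y z : gmul x (y + z) = gmul x y + gmul x z.
Proof.
apply/ffunP=> S; rewrite !ffunE -big_split /=; apply: eq_bigr => A _.
rewrite -big_split /=; apply: eq_bigr => B _; rewrite ffunE.
by case: ifP; rewrite ?addr0 // mulrDr.
Qed.

Lemma gmulZl a x y : gmul (a *: x) y = a *: gmul x y.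
Proof.
apply/ffunP=> S; rewrite gscaleE !gmulE mulr_sumr; apply: eq_bigr => A _.
rewrite mulr_sumr; apply: eq_bigr => B _; rewrite ffunE.
by case: ifP; rewrite ?mulr0 // mulrCA !mulrA.
Qed.

Lemma gmulZr a x y : gmul x (a *: y) = a *: gmul x y.
Proof.
apply/ffunP=> S; rewrite gscaleE !gmulE mulr_sumr; apply: eq_bigr => A _.
rewrite mulr_sumr; apply: eq_bigr => B _; rewrite ffunE.
by case: ifP; rewrite ?mulr0 // mulrCA.
Qed.

Lemma gmul0r x : gmul x 0 = 0.
Proof. by rewrite -[0 in LHS](scale0r (0 : grass)) gmulZr scale0r. Qed.

Lemma gmul0l x : gmul 0 x = 0.
Proof. by rewrite -[0 in LHS](scale0r (0 : grass)) gmulZl scale0r. Qed.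

Lemma gmulBr x y z : gmul x (y - z) = gmul x y - gmul x z.
Proof. by rewrite gmulDr -scaleN1r gmulZr scaleN1r. Qed.

Lemma gmul_sumr x I (r : seq I) (P : pred I) (F : I -> grass) :
  gmul x (\sum_(i <- r | P i) F i) = \sum_(i <- r | P i) gmul x (F i).
Proof. exact: (big_morph _ (gmulDr x) (gmul0r x)). Qed.

Lemma msign0l B : msign set0 B = 1.
Proof.
rewrite /msign (_ : [set _ in _ | _] = set0) ?cards0 //.
by apply/setP=> -[a b]; rewrite !inE.
Qed.

Lemma msign0r A : msign A set0 = 1.
Proof.
rewrite /msign (_ : [set _ in _ | _] = set0) ?cards0 //.
by apply/setP=> -[a b]; rewrite !inE andbF.
Qed.

Lemma msignUl A B C : A :&: B = set0 -> msign (A :|: B) C = msign A C * msign B C.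
Proof.
move=> AB; rewrite /msign -exprD -cards_disjU.
  congr (_ ^+ _); apply: eq_card => -[a c]; rewrite !inE /=.
  by case: (a \in A); case: (a \in B); case: (c \in C); case: (grank c < grank a)%N.
apply/setP=> -[a c]; rewrite !inE /=; apply/negbTE/negP.
move=> /andP[/andP[/andP[aA _] _] /andP[/andP[aB _] _]].
by move/setP: AB => /(_ a); rewrite !inE aA aB.
Qed.

Lemma msignUr A B C : B :&: C = set0 -> msign A (B :|: C) = msign A B * msign A C.
Proof.
move=> BC; rewrite /msign -exprD -cards_disjU.
  congr (_ ^+ _); apply: eq_card => -[a c]; rewrite !inE /=.
  by case: (c \in B); case: (c \in C); case: (a \in A); case: (grank c < grank a)%N.
apply/setP=> -[a c]; rewrite !inE /=; apply/negbTE/negP.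
move=> /andP[/andP[/andP[_ cB] _] /andP[/andP[_ cC] _]].
by move/setP: BC => /(_ c); rewrite !inE cB cC.
Qed.

(* Exchanging two disjoint monomials reverses every pair, so the two signs multiply to
   (-1)^(#|A| #|B|). *)
Lemma msignC A B : A :&: B = set0 -> ~~ odd #|A| -> msign A B = msign B A.
Proof.
move=> AB evenA.
have inv_pairs : msign A B * msign B A = 1.
  rewrite /msign -exprD.
  pose below : {set gen * gen} := [set p | (grank p.2 < grank p.1)%N].
  have -> : [set p in setX B A | (grank p.2 < grank p.1)%N] =
      (fun p => (p.2, p.1)) @: (setX A B :\: below).
    apply/setP => -[b a]; rewrite inE /=; apply/idP/imsetP.
      case/andP => /[!inE] /andP[bB aA] lt; exists (a, b) => //.
      by rewrite !inE aA bB /= -leqNgt ltnW.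
    case=> -[a' b'] /[!inE] /andP[/negP nlt /andP[aA bB]] [-> ->] /=.
    rewrite bB aA /= ltn_neqAle leqNgt; apply/andP; split; last by apply/negP.
    apply/negP => /eqP /grank_inj e.
    by move/setP: AB => /(_ a'); rewrite !inE aA e bB.
  rewrite card_imset; last by move=> [? ?] [? ?] [-> ->].
  rewrite (_ : [set p in _ | _] = setX A B :&: below); last by apply/setP => p; rewrite !inE.
  by rewrite cardsID cardsX -signr_odd oddM (negbTE evenA).
have sqBA : msign B A * msign B A = 1.
  by rewrite /msign -exprD addnn -signr_odd odd_double.
by rewrite -[LHS]mulr1 -sqBA mulrA inv_pairs mul1r.
Qed.

Lemma gmul1l x : gmul gone x = x.
Proof.
apply/ffunP=> S; rewrite gmulE (bigD1 set0) //= [X in _ + X]big1 ?addr0 => [|A A0]; last first.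
  by apply: big1 => B _; rewrite goneE (negbTE A0) mulr0 mul0r if_same.
rewrite (bigD1 S) //= [X in _ + X]big1 ?addr0 => [|B BS]; last by rewrite set0U eq_sym (negbTE BS) andbF.
by rewrite set0I set0U !eqxx msign0l goneE eqxx !mul1r.
Qed.

Lemma gmul1r x : gmul x gone = x.
Proof.
apply/ffunP=> S; rewrite gmulE (bigD1 S) //= [X in _ + X]big1 ?addr0 => [|A AS]; last first.
  apply: big1 => B _; rewrite goneE; case: (B =P set0) => [->|_]; last by rewrite mulr0 if_same.
  by rewrite setU0 (negbTE AS) andbF.
rewrite (bigD1 set0) //= [X in _ + X]big1 ?addr0 => [|B B0]; last by rewrite goneE (negbTE B0) mulr0 if_same.
by rewrite setI0 setU0 !eqxx msign0r goneE eqxx !mulr1 mul1r.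
Qed.

Definition gmul3 x y z S := \sum_A \sum_B \sum_C
  (if [&& A :&: B == set0, A :&: C == set0, B :&: C == set0 & A :|: B :|: C == S]
   then msign A B * msign A C * msign B C * x A * y B * z C else 0).

Lemma gmulA_l x y z S : gmul (gmul x y) z S = gmul3 x y z S.
Proof.
rewrite gmulE.
transitivity (\sum_D \sum_C \sum_A \sum_B
  (if ((A :&: B == set0) && (A :|: B == D)) && ((D :&: C == set0) && (D :|: C == S))
   then msign D C * (msign A B * x A * y B) * z C else 0)).
  apply: eq_bigr => D _; apply: eq_bigr => C _; rewrite gmulE.
  case: ifP => h; last by symmetry; apply: big1 => A _; apply: big1 => B _; rewrite andbF.
  rewrite mulr_sumr mulr_suml; apply: eq_bigr => A _.
  rewrite mulr_sumr mulr_suml; apply: eq_bigr => B _.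
  by rewrite andbT; case: ifP; rewrite ?mulr0 ?mul0r.
under eq_bigr => D _ do rewrite exchange_big.
under eq_bigr => D _ do under eq_bigr => A _ do rewrite exchange_big.
rewrite exchange_big.
under eq_bigr => A _ do rewrite exchange_big.
under eq_bigr => A _ do under eq_bigr => B _ do rewrite exchange_big.
apply: eq_bigr => A _; apply: eq_bigr => B _; apply: eq_bigr => C _.
rewrite (bigD1 (A :|: B)) //= [X in _ + X]big1 ?addr0 => [|D DAB]; last first.
  by move: DAB; rewrite eq_sym => /negbTE ->; rewrite !andbF.
rewrite eqxx andbT setIUl setU_eq0.
case: (A :&: B =P set0) => AB //=; case: (A :&: C =P set0) => AC //=;
  case: (B :&: C =P set0) => BC //=; case: (_ == S) => //=.
by rewrite msignUl //; ring.
Qed.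

Lemma gmulA_r x y z S : gmul x (gmul y z) S = gmul3 x y z S.
Proof.
rewrite gmulE.
transitivity (\sum_A \sum_E \sum_B \sum_C
  (if ((B :&: C == set0) && (B :|: C == E)) && ((A :&: E == set0) && (A :|: E == S))
   then msign A E * x A * (msign B C * y B * z C) else 0)).
  apply: eq_bigr => A _; apply: eq_bigr => E _; rewrite gmulE.
  case: ifP => h; last by symmetry; apply: big1 => B _; apply: big1 => C _; rewrite andbF.
  rewrite mulr_sumr; apply: eq_bigr => B _.
  rewrite mulr_sumr; apply: eq_bigr => C _.
  by rewrite andbT; case: ifP; rewrite ?mulr0 ?mul0r.
under eq_bigr => A _ do rewrite exchange_big.
under eq_bigr => A _ do under eq_bigr => B _ do rewrite exchange_big.
apply: eq_bigr => A _; apply: eq_bigr => B _; apply: eq_bigr => C _.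
rewrite (bigD1 (B :|: C)) //= [X in _ + X]big1 ?addr0 => [|E EBC]; last first.
  by move: EBC; rewrite eq_sym => /negbTE ->; rewrite !andbF.
rewrite eqxx andbT setIUr setU_eq0 setUA.
case: (A :&: B =P set0) => AB //=; case: (A :&: C =P set0) => AC //=;
  case: (B :&: C =P set0) => BC //=; case: (_ == S) => //=.
by rewrite msignUr //; ring.
Qed.

Lemma gmulA x y z : gmul x (gmul y z) = gmul (gmul x y) z.
Proof. by apply/ffunP => S; rewrite gmulA_l gmulA_r. Qed.

(** * Supports *)

Definition supp_in (Q : pred {set gen}) x := forall S, x S != 0 -> Q S.
Definition even := supp_in (fun S => ~~ odd #|S|).
Definition local X := supp_in (fun S => S \subset X).
Definition has_gen (g : gen) := supp_in (fun S => g \in S).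

Lemma supp_in0 Q : supp_in Q 0.
Proof. by move=> S; rewrite ffunE eqxx. Qed.

Lemma supp_inD Q x y : supp_in Q x -> supp_in Q y -> supp_in Q (x + y).
Proof.
move=> Qx Qy S; rewrite ffunE; case: (eqVneq (x S) 0) => [->|/Qx //].
by rewrite add0r => /Qy.
Qed.

Lemma supp_inZ Q a x : supp_in Q x -> supp_in Q (a *: x).
Proof. by move=> Qx S; rewrite gscaleE; case: (eqVneq (x S) 0) => [->|/Qx //]; rewrite mulr0 eqxx. Qed.

Lemma supp_inB Q x y : supp_in Q x -> supp_in Q y -> supp_in Q (x - y).
Proof. by move=> Qx Qy; apply: supp_inD => //; rewrite -scaleN1r; apply: supp_inZ. Qed.

Lemma supp_in_sum Q I (r : seq I) (P : pred I) (F : I -> grass) :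
  (forall i, P i -> supp_in Q (F i)) -> supp_in Q (\sum_(i <- r | P i) F i).
Proof.
move=> QF; elim/big_rec: _ => [|i z Pi Qz]; first exact: supp_in0.
exact: supp_inD (QF i Pi) Qz.
Qed.

Lemma sub_supp_in (Q1 Q2 : pred {set gen}) x :
  subpred Q1 Q2 -> supp_in Q1 x -> supp_in Q2 x.
Proof. by move=> Q12 Qx S /Qx /Q12. Qed.

Lemma local_sub X Y x : X \subset Y -> local X x -> local Y x.
Proof. by move=> XY; apply: sub_supp_in => S /subset_trans; apply. Qed.

Lemma local_gone X : local X gone.
Proof. by move=> S; rewrite goneE; case: (S =P set0) => [->|_]; rewrite ?sub0set ?eqxx. Qed.

Lemma even_gone : even gone.
Proof. by move=> S; rewrite goneE; case: (S =P set0) => [->|_]; rewrite ?cards0 ?eqxx. Qed.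

Lemma local0 X x S : local X x -> ~~ (S \subset X) -> x S = 0.
Proof. by move=> Xx; apply: contraNeq => /Xx. Qed.

Lemma gmul_supp x y S : gmul x y S != 0 ->
  exists A B, [/\ A :&: B = set0, A :|: B = S, x A != 0 & y B != 0].
Proof.
move=> nz; have [A /existsP[B /and4P[/eqP AB /eqP ABS xA yB]]|noAB] :=
  pickP (fun A => [exists B, [&& A :&: B == set0, A :|: B == S, x A != 0 & y B != 0]]).
  by exists A, B.
case/negP: nz; rewrite gmulE big1 // => A _; apply: big1 => B _.
case: ifP => // /andP[AB ABS]; move/negbT: (noAB A); rewrite negb_exists => /forallP/(_ B).
by rewrite AB ABS /= negb_and !negbK => /orP[] /eqP ->; rewrite ?mulr0 ?mul0r.
Qed.

Lemma supp_in_mul (Q1 Q2 Q3 : pred {set gen}) x y :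
  supp_in Q1 x -> supp_in Q2 y ->
  (forall A B, A :&: B = set0 -> Q1 A -> Q2 B -> Q3 (A :|: B)) -> supp_in Q3 (gmul x y).
Proof. by move=> Q1x Q2y Q S /gmul_supp [A [B [AB <- /Q1x xA /Q2y yB]]]; apply: Q. Qed.

Lemma even_mul x y : even x -> even y -> even (gmul x y).
Proof.
move=> ex ey; apply: supp_in_mul ex ey _ => A B AB eA eB.
by rewrite cards_disjU // oddD (negbTE eA) (negbTE eB).
Qed.

Lemma even_mul_odd x y : supp_in (fun S => odd #|S|) x -> supp_in (fun S => odd #|S|) y ->
  even (gmul x y).
Proof.
move=> ox oy; apply: supp_in_mul ox oy _ => A B AB oA oB.
by rewrite cards_disjU // oddD oA oB.
Qed.

Lemma local_mul X Y x y : local X x -> local Y y -> local (X :|: Y) (gmul x y).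
Proof. by move=> Xx Yy; apply: supp_in_mul Xx Yy _ => A B _; apply: setUSS. Qed.

Lemma has_gen_mull g x y : has_gen g x -> has_gen g (gmul x y).
Proof.
by move=> gx; apply: (supp_in_mul (Q2 := predT)) gx _ _ => // A B _ gA _; rewrite inE gA.
Qed.

Lemma has_gen_mulr g x y : has_gen g y -> has_gen g (gmul x y).
Proof.
by move=> gy; apply: (supp_in_mul (Q1 := predT)) _ gy _ => // A B _ _ gB; rewrite inE gB orbT.
Qed.

Lemma gmul_has_gen0 g x y : has_gen g x -> has_gen g y -> gmul x y = 0.
Proof.
move=> gx gy; apply/ffunP => S; rewrite [RHS]ffunE; apply/eqP.
apply: contraT => /gmul_supp [A [B [AB _ /gx gA /gy gB]]].
by move/setP: AB => /(_ g); rewrite !inE gA gB.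
Qed.

Lemma gmulC x y : even x -> gmul x y = gmul y x.
Proof.
move=> ex; apply/ffunP => S; rewrite !gmulE [RHS]exchange_big.
apply: eq_bigr => A _; apply: eq_bigr => B _.
rewrite setIC setUC; case: ifP => // /andP[/eqP AB _].
case: (eqVneq (x A) 0) => [->|/ex eA]; first by rewrite !mulr0 !mul0r.
by rewrite msignC; [ring | rewrite setIC | ].
Qed.

Lemma gmulCA x y z : even x -> gmul y (gmul x z) = gmul x (gmul y z).
Proof. by move=> ex; rewrite !gmulA (gmulC y ex). Qed.

Lemma gmul_top X Y x y : X :&: Y = set0 -> local X x -> local Y y ->
  gmul x y (X :|: Y) = msign X Y * x X * y Y.
Proof.
move=> XY Xx Yy; rewrite gmulE (bigD1 X) //= [X in _ + X]big1 ?addr0 => [|A AX].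
  rewrite (bigD1 Y) //= [X in _ + X]big1 ?addr0 => [|B BY]; first by rewrite XY !eqxx.
  case: ifP => // /andP[/eqP XB /eqP XBe].
  case: (eqVneq (y B) 0) => [->|/Yy sB]; first by rewrite mulr0.
  case/negP: BY; rewrite eqEsubset sB; apply/subsetP => b bY.
  have : b \in X :|: B by rewrite XBe inE bY orbT.
  rewrite inE => /orP[bX|//].
  by move/setP: XY => /(_ b); rewrite !inE bX bY.
apply: big1 => B _; case: ifP => // /andP[/eqP AB /eqP ABe].
case: (eqVneq (x A) 0) => [->|/Xx sA]; first by rewrite mulr0 mul0r.
case: (eqVneq (y B) 0) => [->|/Yy sB]; first by rewrite mulr0.
case/negP: AX; rewrite eqEsubset sA; apply/subsetP => a aX.
have : a \in A :|: B by rewrite ABe inE aX.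
rewrite inE => /orP[//|aB].
by move/setP: XY => /(_ a); rewrite !inE aX (subsetP sB).
Qed.

(** * Finite products *)

Definition gprod (s : seq grass) := foldr gmul gone s.

Lemma gprod_cat s t : gmul (gprod s) (gprod t) = gprod (s ++ t).
Proof. by elim: s => [|x s IH] /=; rewrite ?gmul1l // -gmulA IH. Qed.

Lemma gprod_flatten (ss : seq (seq grass)) : gprod (flatten ss) = gprod (map gprod ss).
Proof. by elim: ss => [|s ss IH] //=; rewrite -gprod_cat IH. Qed.

Lemma even_gprod s : {in s, forall x, even x} -> even (gprod s).
Proof.
elim: s => [|x s IH] es /=; first exact: even_gone.
by apply: even_mul; [apply: es; rewrite mem_head | apply: IH => y ys; apply: es; rewrite inE ys orbT].
Qed.

Lemma local_gprod X s : {in s, forall x, local X x} -> local X (gprod s).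
Proof.
elim: s => [|x s IH] Xs /=; first exact: local_gone.
rewrite -[X]setUid; apply: local_mul; first by apply: Xs; rewrite mem_head.
by apply: IH => y ys; apply: Xs; rewrite inE ys orbT.
Qed.

Lemma has_gen_gprod g x s : x \in s -> has_gen g x -> has_gen g (gprod s).
Proof.
elim: s => [//|y s IH] /=; rewrite inE => /orP[/eqP <-|xs] gx.
  exact: has_gen_mull.
exact: has_gen_mulr (IH xs gx).
Qed.

Lemma gprod_perm s1 s2 : {in s1, forall x, even x} -> perm_eq s1 s2 -> gprod s1 = gprod s2.
Proof.
elim: s1 s2 => [|x s IH] t es; first by move/perm_size => /esym /size0nil ->.
move=> st; have xt : x \in t by rewrite -(perm_mem st) mem_head.
move: st; case/splitPr: xt => t1 t2 st.
have ex : even x by apply: es; rewrite mem_head.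
have -> : gprod (t1 ++ x :: t2) = gmul x (gprod (t1 ++ t2)).
  by elim: t1 {st} => [|y t1 IHt] //=; rewrite IHt gmulCA.
rewrite /= (IH (t1 ++ t2)) // => [y ys|]; first by apply: es; rewrite inE ys orbT.
by rewrite -(perm_cons x); apply: (perm_trans st); rewrite -cat1s perm_catCA.
Qed.

Lemma gprod_map_mul I (f g : I -> grass) (s : seq I) : (forall i, even (g i)) ->
  gmul (gprod (map f s)) (gprod (map g s)) = gprod [seq gmul (f i) (g i) | i <- s].
Proof.
move=> eg; elim: s => [|i s IH] /=; first by rewrite gmul1l.
by rewrite -gmulA (gmulCA _ _ (eg i)) gmulA IH.
Qed.

Lemma ggenE g S : ggen g S = (S == [set g])%:R.
Proof. by rewrite ffunE. Qed.

Lemma odd_ggen g : supp_in (fun S => odd #|S|) (ggen g).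
Proof. by move=> S; rewrite ggenE; case: (eqVneq S [set g]) => [->|_]; rewrite ?cards1 ?eqxx. Qed.

Lemma local_ggen g : local [set g] (ggen g).
Proof. by move=> S; rewrite ggenE; case: (eqVneq S [set g]) => [->|_]; rewrite ?eqxx. Qed.

Lemma has_gen_ggen g : has_gen g (ggen g).
Proof. by move=> S; rewrite ggenE; case: (eqVneq S [set g]) => [->|_]; rewrite ?eqxx ?set11. Qed.

Definition tau1 (v : V) := gmul (psib v) (psi v).

Lemma even_tau1 v : even (tau1 v).
Proof. by apply: even_mul_odd; apply: odd_ggen. Qed.

Lemma local_tau1 v : local [set inr v; inl v] (tau1 v).
Proof. by apply: local_mul; apply: local_ggen. Qed.

Lemma has_genr_tau1 v : has_gen (inr v) (tau1 v).
Proof. by apply: has_gen_mull; apply: has_gen_ggen. Qed.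

Lemma has_genl_tau1 v : has_gen (inl v) (tau1 v).
Proof. by apply: has_gen_mulr; apply: has_gen_ggen. Qed.

Lemma tau_gprod (A : {set V}) : tau A = gprod (map tau1 (enum A)).
Proof. by rewrite /tau /gprod foldr_map. Qed.

(** * Berezin integration *)

Lemma cards_set1_filter (T : finType) (a : T) (P : pred T) : #|[set b in [set a] | P b]| = P a.
Proof.
case: (boolP (P a)) => Pa.
  rewrite (_ : [set b in _ | _] = [set a]) ?cards1 //.
  by apply/setP => b; rewrite !inE; case: eqP => // ->.
rewrite (_ : [set b in _ | _] = set0) ?cards0 //.
by apply/setP => b; rewrite !inE; case: eqP => // ->; rewrite (negbTE Pa).
Qed.

Definition sign_below (g : gen) S : R[i] := (-1) ^+ #|[set a in S | (grank a < grank g)%N]|.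

Lemma sign_belowU g A B : A :&: B = set0 ->
  sign_below g (A :|: B) = sign_below g A * sign_below g B.
Proof.
move=> AB; rewrite /sign_below -exprD -cards_disjU.
  by congr (_ ^+ _); apply: eq_card => a; rewrite !inE andb_orl.
apply/setP => a; rewrite !inE; apply/negbTE/negP => /andP[/andP[aA _] /andP[aB _]].
by move/setP: AB => /(_ a); rewrite !inE aA aB.
Qed.

(* The two signs count the elements of [A] above and below [g]: [#|A|] of them in all. *)
Lemma msign_set1 A g : g \notin A -> ~~ odd #|A| -> msign A [set g] * sign_below g A = 1.
Proof.
move=> gA evenA; rewrite /msign /sign_below -exprD.
pose above : {set gen} := [set a | (grank g < grank a)%N].
have -> : [set p in setX A [set g] | (grank p.2 < grank p.1)%N] =
    (fun a => (a, g)) @: (A :&: above).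
  apply/setP => -[a b]; rewrite !inE /=; apply/idP/imsetP.
    by case/andP => /andP[aA /eqP ->] lt; exists a; rewrite // !inE aA.
  by case=> a' /[!inE] /andP[aA lt] [-> ->]; rewrite aA eqxx.
rewrite card_imset; last by move=> ? ? [].
have -> : [set a in A | (grank a < grank g)%N] = A :\: above.
  apply/setP => a; rewrite !inE; case: (boolP (a \in A)) => aA; rewrite ?andbF //.
  rewrite andbT -leqNgt [RHS]leq_eqVlt; case: eqP => //= /grank_inj ga.
  by move: gA; rewrite -ga aA.
by rewrite cardsID -signr_odd (negbTE evenA).
Qed.

Lemma gmul_subsetE x y S : gmul x y S =
  \sum_(A : {set gen}) (if A \subset S then msign A (S :\: A) * x A * y (S :\: A) else 0).
Proof.
rewrite gmulE; apply: eq_bigr => A _.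
have splitS B : (A :&: B == set0) && (A :|: B == S) = (A \subset S) && (B == S :\: A).
  apply/idP/idP => [/andP[/eqP AB /eqP <-]|/andP[AS /eqP ->]].
    rewrite subsetUl; apply/eqP/setP => b; rewrite !inE.
    case: (boolP (b \in B)) => bB; last by rewrite orbF andNb.
    by move/setP: AB => /(_ b); rewrite !inE bB andbT => ->.
  rewrite setUD_subset // eqxx andbT; apply/eqP/setP => b; rewrite !inE.
  by case: (b \in A); rewrite ?andbF.
under eq_bigr => B _ do rewrite splitS.
case: (A \subset S) => /=; last by apply: big1.
by rewrite -big_mkcond big_pred1_eq.
Qed.

Lemma dleft_mul g X x y : even x -> local X x -> g \notin X ->
  dleft g (gmul x y) = gmul x (dleft g y).
Proof.
move=> ex Xx gX; apply/ffunP => S; rewrite [LHS]ffunE [RHS]gmul_subsetE.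
have gA A : x A != 0 -> g \notin A by move=> /Xx AX; apply: contra gX; apply: (subsetP AX).
case: (boolP (g \in S)) => gS.
  symmetry; apply: big1 => A _; case: ifP => // AS; rewrite ffunE.
  case: (eqVneq (x A) 0) => [->|/gA nA]; first by rewrite mulr0 mul0r.
  by rewrite inE gS nA mulr0.
rewrite gmul_subsetE mulr_sumr; apply: eq_bigr => A _.
case: (eqVneq (x A) 0) => [->|xA]; first by rewrite !mulr0 !mul0r !if_same mulr0.
have nA := gA _ xA; have evenA := ex _ xA.
have -> : (A \subset g |: S) = (A \subset S).
  apply/idP/idP => AS; last exact: subset_trans AS (subsetUr _ _).
  apply/subsetP => a aA; have := subsetP AS a aA; rewrite !inE => /orP[/eqP ga|//].
  by move: nA; rewrite -ga aA.
case: ifP => AS; last by rewrite mulr0.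
have -> : (g |: S) :\: A = g |: (S :\: A).
  by apply/setP => a; rewrite !inE; case: eqP => [->|] //=; rewrite nA.
rewrite [dleft _ _ _]ffunE !inE (negbTE gS) andbF /=.
rewrite -/(sign_below g S) -/(sign_below g (S :\: A)).
rewrite msignUr; last first.
  by apply/setP => a; rewrite !inE; case: (eqVneq a g) => [->|]; rewrite ?(negbTE gS) ?andbF.
rewrite -{1}(setUD_subset AS) sign_belowU; last first.
  by apply/setP => a; rewrite !inE; case: (a \in A); rewrite ?andbF.
transitivity (msign A [set g] * sign_below g A *
  (msign A (S :\: A) * x A * (sign_below g (S :\: A) * y (g |: (S :\: A))))); first by ring.
by rewrite msign_set1 // mul1r.
Qed.

Definition dpair (v : V) x := dleft (inl v) (dleft (inr v) x).

Lemma dpair_tau1 v : dpair v (tau1 v) = gone.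
Proof.
apply/ffunP => S; rewrite /dpair goneE ffunE.
case: (boolP (inl v \in S)) => lS.
  by case: (S =P set0) => // S0; move: lS; rewrite S0 inE.
rewrite ffunE in_setU1 /=.
case: (boolP (inr v \in S)) => rS.
  by rewrite mulr0; case: (S =P set0) => // S0; move: rS; rewrite S0 inE.
case: (S =P set0) => [S0|/eqP /set0Pn [a aS]]; last first.
  rewrite (local0 (@local_tau1 v)) ?mulr0 //; apply/negP => /subsetP /(_ a).
  rewrite !inE aS !orbT => /(_ isT) /orP[] /eqP ea; by move: aS; rewrite ea ?(negbTE rS) ?(negbTE lS).
rewrite S0 /sign_below setU0.
rewrite (_ : [set a in set0 | _] = set0) ?cards0 ?mul1r; last by apply/setP => a; rewrite !inE.
rewrite /tau1 (gmul_top (X := [set inr v]) (Y := [set inl v])); try exact: local_ggen; last first.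
  by apply/setP => a; rewrite !inE; case: eqP => // ->.
rewrite !ggenE !eqxx !mulr1 /msign cards_set1_filter.
rewrite (_ : [set p in setX _ _ | _] = [set p in [set (inr v, inl v)] | (grank p.2 < grank p.1)%N]).
  by rewrite cards_set1_filter /= -exprD addnn -signr_odd odd_double.
by apply/setP => -[a b]; rewrite !inE xpair_eqE.
Qed.

Lemma inl_eq_inl (u v : V) : (inl u == inl v :> gen) = (u == v). Proof. by []. Qed.
Lemma inr_eq_inr (u v : V) : (inr u == inr v :> gen) = (u == v). Proof. by []. Qed.
Lemma inl_eq_inr (u v : V) : (inl u == inr v :> gen) = false. Proof. by []. Qed.
Lemma inr_eq_inl (u v : V) : (inr u == inl v :> gen) = false. Proof. by []. Qed.
Definition gen_eqE := (inl_eq_inl, inr_eq_inr, inl_eq_inr, inr_eq_inl).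

Definition gvert (g : gen) : V := match g with inl v | inr v => v end.
Definition gens (A : {set V}) : {set gen} := [set g | gvert g \in A].

Lemma dpair_mul v X x y : even x -> local X x -> inl v \notin X -> inr v \notin X ->
  dpair v (gmul x y) = gmul x (dpair v y).
Proof. by move=> ex Xx lX rX; rewrite /dpair (dleft_mul _ ex Xx rX) (dleft_mul _ ex Xx lX). Qed.

Lemma foldr_dpair_tau1 (s : seq V) X x : uniq s -> even x -> local X x ->
    {in s, forall v, (inl v \notin X) && (inr v \notin X)} ->
  foldr dpair (gmul x (gprod (map tau1 s))) s = x.
Proof.
elim: s X x => [|v s IH] X x /=; first by rewrite gmul1r.
case/andP => vs us ex Xx Xs; have /andP[lX rX] := Xs v (mem_head _ _).
rewrite gmulA (IH (X :|: [set inr v; inl v])).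
- by rewrite (dpair_mul _ ex Xx lX rX) dpair_tau1 gmul1r.
- exact: us.
- exact: even_mul ex (even_tau1 (v := v)).
- exact: local_mul Xx (local_tau1 (v := v)).
move=> u us'; have /andP[lu ru] : (inl u \notin X) && (inr u \notin X) by apply: Xs; rewrite inE us' orbT.
have uv : (u == v) = false by apply: contraNF vs => /eqP <-.
by rewrite !inE (negbTE lu) (negbTE ru) !gen_eqE uv.
Qed.

Lemma berezin_tauT : berezin (tau [set: V]) = gone.
Proof.
rewrite tau_gprod enum_setT -enumT -[gprod _]gmul1l.
change (foldr dpair (gmul gone (gprod (map tau1 (enum V)))) (enum V) = gone).
apply: (foldr_dpair_tau1 (X := set0)); [exact: enum_uniq | exact: even_gone | exact: local_gone |].
by move=> v _; rewrite !inE.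
Qed.

(* Each derivative removes one generator, so a partial integral only reads the coefficient
   of the monomial completed by the integrated generators. *)
Lemma foldr_dpairE (s : seq V) : uniq s -> exists c : {set gen} -> R[i], forall F S,
  foldr dpair F s S =
  if S :&: gens [set v in s] == set0 then c S * F (S :|: gens [set v in s]) else 0.
Proof.
elim: s => [|v s IH] /=.
  exists (fun _ => 1) => F S; have -> : gens [set v in [::]] = set0 by apply/setP => g; rewrite !inE.
  by rewrite setI0 eqxx mul1r setU0.
case/andP => vs us; have [c cE] := IH us.
exists (fun S => sign_below (inl v) S * sign_below (inr v) (inl v |: S) * c (inr v |: (inl v |: S))).
move=> F S; rewrite /dpair ffunE.
case: (boolP (inl v \in S)) => lS.
  by case: eqP => // /setP /(_ (inl v)); rewrite !inE lS /= eqxx.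
rewrite ffunE in_setU1 /=.
case: (boolP (inr v \in S)) => rS.
  by rewrite mulr0; case: eqP => // /setP /(_ (inr v)); rewrite !inE rS /= eqxx.
rewrite cE.
have -> : (inr v |: (inl v |: S)) :&: gens [set u in s] = S :&: gens [set u in v :: s].
  by apply/setP => -[u|u]; rewrite !inE /= !gen_eqE;
    case: (eqVneq u v) => [->|] /=; rewrite ?(negbTE lS) ?(negbTE rS) ?(negbTE vs) ?andbF.
have -> : (inr v |: (inl v |: S)) :|: gens [set u in s] = S :|: gens [set u in v :: s].
  by apply/setP => -[u|u]; rewrite !inE /= !gen_eqE;
    case: (eqVneq u v) => [->|] /=; rewrite ?orbT ?orbF.
case: ifP => _; last by rewrite !mulr0.
by rewrite /sign_below; ring.
Qed.

Lemma berezin_top (F : grass) a : F setT = a * tau [set: V] setT -> berezin F = gconst a.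
Proof.
have [c cE] := foldr_dpairE (enum_uniq V).
have gens_enum : gens [set v in enum V] = setT by apply/setP => g; rewrite !inE mem_enum.
have berezinE G : berezin G = gconst (c set0 * G setT).
  apply/ffunP => S; rewrite [LHS](cE G S) gens_enum setIT setUT ffunE.
  by case: eqP => [->|].
have /ffunP /(_ set0) := berezin_tauT; rewrite berezinE !ffunE eqxx => ctau.
by move=> Fa; rewrite berezinE Fa mulrCA ctau mulr1.
Qed.

(** * The block factors *)

Lemma even_tau (D : {set V}) : even (tau D).
Proof. by rewrite tau_gprod; apply: even_gprod => _ /mapP[v _ ->]; apply: even_tau1. Qed.

Lemma local_tau1_gens v (D : {set V}) : v \in D -> local (gens D) (tau1 v).
Proof.
move=> vD; apply: local_sub (local_tau1 (v := v)).
by apply/subsetP => g; rewrite !inE => /orP[] /eqP ->.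
Qed.

Lemma local_tau (D : {set V}) : local (gens D) (tau D).
Proof. by rewrite tau_gprod; apply: local_gprod => _ /mapP[v vD ->]; apply: local_tau1_gens; rewrite -mem_enum. Qed.

Lemma has_gen_tau v (D : {set V}) : v \in D -> has_gen (inr v) (tau D).
Proof.
move=> vD; rewrite tau_gprod; apply: (has_gen_gprod (x := tau1 v)); last exact: has_genr_tau1.
by apply: map_f; rewrite mem_enum.
Qed.

Lemma gens_subset (D1 D2 : {set V}) : D1 \subset D2 -> gens D1 \subset gens D2.
Proof. by move=> D12; apply/subsetP => g; rewrite !inE => /(subsetP D12). Qed.

Lemma perm_enum_setD1 (D : {set V}) v : v \in D -> perm_eq (enum D) (v :: enum (D :\ v)).
Proof.
move=> vD; apply: uniq_perm; rewrite /= ?enum_uniq ?mem_enum ?setD11 // => u.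
by rewrite inE !mem_enum !inE; case: eqP => [->|].
Qed.

Lemma tau_setD1 (D : {set V}) v : v \in D -> tau D = gmul (tau1 v) (tau (D :\ v)).
Proof.
move=> vD; rewrite !tau_gprod -[gmul _ _]/(gprod (tau1 v :: _)) -map_cons.
apply: gprod_perm => [_ /mapP[u _ ->]|]; first exact: even_tau1.
exact/perm_map/perm_enum_setD1.
Qed.

Definition etau (t : V -> R[i]) v := gone + t v *: tau1 v.

Lemma gpow_nilpotent x k : gmul x x = 0 -> (1 < k)%N -> gpow x k = 0.
Proof. by move=> xx; case: k => [|[|k]] // _; rewrite /gpow !iterS gmulA xx gmul0l. Qed.

Lemma gexp_tau1 t v : gexp (t v *: tau1 v) = etau t v.
Proof.
have sq0 : gmul (t v *: tau1 v) (t v *: tau1 v) = 0.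
  by rewrite gmulZl gmulZr (gmul_has_gen0 (has_genr_tau1 (v := v)) (has_genr_tau1 (v := v))) !scaler0.
rewrite /gexp; have : (0 < #|{: gen}|)%N by apply/card_gt0P; exists (inl v).
case: #|{: gen}| => [//|n] _.
rewrite 2!big_ord_recl big1 ?addr0 => [|k _]; last by rewrite gpow_nilpotent ?scaler0.
by rewrite /gpow /= gmul1r !fact0 invr1 !scale1r.
Qed.

Lemma even_etau t v : even (etau t v).
Proof. by apply: supp_inD; [exact: even_gone | apply: supp_inZ; exact: even_tau1]. Qed.

Lemma etau_absorb t v z : has_gen (inl v) z \/ has_gen (inr v) z -> gmul (etau t v) z = z.
Proof.
move=> vz; rewrite /etau gmulDl gmul1l gmulZl.
suff -> : gmul (tau1 v) z = 0 by rewrite scaler0 addr0.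
by case: vz; [apply: gmul_has_gen0 (has_genl_tau1 (v := v)) | apply: gmul_has_gen0 (has_genr_tau1 (v := v))].
Qed.

Lemma gprod_etau_absorb t (s : seq V) z :
  {in s, forall v, has_gen (inl v) z \/ has_gen (inr v) z} -> gmul (gprod (map (etau t) s)) z = z.
Proof.
elim: s => [|v s IH] vz /=; first by rewrite gmul1l.
rewrite -gmulA IH => [|u us]; last by apply: vz; rewrite inE us orbT.
by apply: etau_absorb; apply: vz; rewrite mem_head.
Qed.

Section Block.
Variables (t : V -> R[i]) (A : {set V}).

Local Notation E := (gprod (map (etau t) (enum A))).

Lemma etau_tau : gmul E (tau A) = tau A.
Proof. by apply: gprod_etau_absorb => v; rewrite mem_enum => vA; right; apply: has_gen_tau. Qed.

Lemma etau_tauD1 v : v \in A -> gmul E (tau (A :\ v)) = tau (A :\ v) + t v *: tau A.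
Proof.
move=> vA; rewrite (gprod_perm (s2 := map (etau t) (v :: enum (A :\ v)))); last first.
- exact/perm_map/perm_enum_setD1.
- by move=> _ /mapP[u _ ->]; apply: even_etau.
rewrite /= -gmulA gprod_etau_absorb => [|u]; last first.
  by rewrite mem_enum => uA; right; apply: has_gen_tau.
by rewrite /etau gmulDl gmul1l gmulZl -tau_setD1.
Qed.

Lemma etau_hop i j : i \in A -> j \in A -> j != i ->
  gmul E (gmul (gmul (psib i) (psi j)) (tau (A :\ i :\ j))) =
  gmul (gmul (psib i) (psi j)) (tau (A :\ i :\ j)).
Proof.
move=> iA jA ji; apply: gprod_etau_absorb => k; rewrite mem_enum => kA.
case: (eqVneq k i) => [->|ki]; first by right; do 2!apply: has_gen_mull; apply: has_gen_ggen.
case: (eqVneq k j) => [->|kj].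
  by left; apply: has_gen_mull; apply: has_gen_mulr; apply: has_gen_ggen.
by right; apply: has_gen_mulr; apply: has_gen_tau; rewrite !inE ki kj.
Qed.

Lemma hop_top0 i j : i \in A -> j != i ->
  gmul (gmul (psib i) (psi j)) (tau (A :\ i :\ j)) (gens A) = 0.
Proof.
move=> iA ji; apply: (local0 (X := [set inr i; inl j] :|: gens (A :\ i :\ j))).
  by apply: local_mul; [apply: local_mul; apply: local_ggen | apply: local_tau].
apply/negP => /subsetP /(_ (inl i)); rewrite !inE /= !gen_eqE iA eqxx (eq_sym i) (negbTE ji).
by move/(_ isT).
Qed.

Lemma tau_setD1_top0 i : i \in A -> tau (A :\ i) (gens A) = 0.
Proof.
move=> iA; apply: (local0 (local_tau (D := A :\ i))); apply/negP => /subsetP /(_ (inl i)).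
by rewrite !inE /= eqxx iA; move/(_ isT).
Qed.

Lemma etau_fA_top lam : gmul E (fA lam A) (gens A) =
  (lam * (1 - #|A|%:R) + \sum_(i in A) t i) * tau A (gens A).
Proof.
rewrite /fA gmulBr gmulDr gmulZr !gmul_sumr etau_tau.
under eq_bigr => i iA do rewrite (etau_tauD1 iA).
under [X in _ - X]eq_bigr => i iA do rewrite gmul_sumr.
under [X in _ - X]eq_bigr => i iA do
  under eq_bigr => j /andP[jA ji] do rewrite (etau_hop iA jA ji).
rewrite gsubE gaddE gscaleE !sum_ffunE [X in _ - X]big1 ?subr0 => [|i iA]; last first.
  by rewrite sum_ffunE big1 // => j /andP[_ ji]; apply: hop_top0.
under eq_bigr => i iA do rewrite gaddE gscaleE tau_setD1_top0 // add0r.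
by rewrite -mulr_suml mulrDl.
Qed.

End Block.

Lemma even_fA lam (D : {set V}) : even (fA lam D).
Proof.
apply: supp_inB; first apply: supp_inD.
- exact/supp_inZ/even_tau.
- by apply: supp_in_sum => i _; apply: even_tau.
- apply: supp_in_sum => i _; apply: supp_in_sum => j _.
  by apply: even_mul; [apply: even_mul_odd; apply: odd_ggen | apply: even_tau].
Qed.

Lemma local_fA lam (D : {set V}) : local (gens D) (fA lam D).
Proof.
apply: supp_inB; first apply: supp_inD.
- exact/supp_inZ/local_tau.
- apply: supp_in_sum => i _; apply: (local_sub (X := gens (D :\ i))); last exact: local_tau.
  exact/gens_subset/subD1set.
- apply: supp_in_sum => i iD; apply: supp_in_sum => j /andP[jD _].
  rewrite -[gens D]setUid; apply: local_mul.
    apply: local_sub (local_mul (local_ggen (g := inr i)) (local_ggen (g := inl j))).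
    by apply/subsetP => g; rewrite !inE => /orP[] /eqP ->.
  by apply/local_sub/local_tau/gens_subset; apply/subsetP => k; rewrite !inE => /and3P[].
Qed.

Lemma local_etau_fA t lam (D : {set V}) :
  local (gens D) (gmul (gprod (map (etau t) (enum D))) (fA lam D)).
Proof.
rewrite -[gens D]setUid; apply: local_mul; last exact: local_fA.
apply: local_gprod => _ /mapP[v vD ->].
apply: supp_inD; first exact: local_gone.
by apply/supp_inZ/local_tau1_gens; rewrite -mem_enum.
Qed.

(** * Gluing the blocks *)

Local Notation disjoint_sets := (fun D1 D2 : {set V} => [disjoint D1 & D2]).

Lemma gensU (D1 D2 : {set V}) : gens (D1 :|: D2) = gens D1 :|: gens D2.
Proof. by apply/setP => g; rewrite !inE. Qed.

Lemma gensT : gens [set: V] = [set: gen].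
Proof. by apply/setP => g; rewrite !inE. Qed.

Lemma gensI0 (D1 D2 : {set V}) : [disjoint D1 & D2] -> gens D1 :&: gens D2 = set0.
Proof.
move=> /disjoint_setI0 /setP D12; apply/setP => g.
by have := D12 (gvert g); rewrite !inE.
Qed.

Lemma gprod_top_blocks (L : seq {set V}) (x y : {set V} -> grass) (a : {set V} -> R[i]) :
    pairwise disjoint_sets L ->
    (forall D, D \in L -> [/\ local (gens D) (x D), local (gens D) (y D)
                            & x D (gens D) = a D * y D (gens D)]) ->
  gprod (map x L) (gens (\bigcup_(D <- L) D)) =
  (\prod_(D <- L) a D) * gprod (map y L) (gens (\bigcup_(D <- L) D)).
Proof.
elim: L => [|D L IH] /=; first by rewrite !big_nil mul1r.
move=> /andP[/allP DL pL] xya.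
have [xD yD xyD] := xya D (mem_head _ _).
have dis : gens D :&: gens (\bigcup_(D' <- L) D') = set0.
  by apply/gensI0; rewrite bigcup_seq; apply: bigcup_disjoint => D' /DL.
have localL (z : {set V} -> grass) : (forall D', D' \in D :: L -> local (gens D') (z D')) ->
    local (gens (\bigcup_(D' <- L) D')) (gprod (map z L)).
  move=> zL; apply: local_gprod => _ /mapP[D' D'L ->].
  apply: (local_sub (X := gens D')); last by apply: zL; rewrite inE D'L orbT.
  by apply: gens_subset; rewrite bigcup_seq (bigcup_sup D').
rewrite !big_cons gensU !(gmul_top dis) //; last 2 first.
- by apply: localL => D' /xya[].
- by apply: localL => D' /xya[].
rewrite xyD IH // => [|D' D'L]; first by ring.
by apply: xya; rewrite inE D'L orbT.
Qed.

Lemma pairwise_disjoint_partition (P : {set {set V}}) (D : {set V}) :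
  partition P D -> pairwise disjoint_sets (enum P).
Proof.
case/and3P => _ /trivIsetP trivP _.
have : uniq (enum P) := enum_uniq P; rewrite uniq_pairwise.
apply: (@sub_in_pairwise _ (fun C : {set V} => C \in P)).
- by move=> C1 C2 C1P C2P; apply: trivP.
by apply/allP => C; rewrite mem_enum.
Qed.

Lemma uniq_flatten_enum (L : seq {set V}) :
  pairwise disjoint_sets L -> uniq (flatten [seq enum D | D : {set V} <- L]).
Proof.
elim: L => //= D L IH /andP[/allP DL pL].
rewrite cat_uniq enum_uniq IH // andbT; apply/hasPn => v /flattenP[_ /mapP[D' D'L ->]].
rewrite !mem_enum => vD'; apply: contraL (DL D' D'L) => vD.
by apply/pred0Pn; exists v; rewrite /= vD.
Qed.

Lemma perm_enum_partition (P : {set {set V}}) :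
  partition P [set: V] -> perm_eq (enum V) (flatten [seq enum C | C : {set V} <- enum P]).
Proof.
move=> partP; apply: uniq_perm; first exact: enum_uniq.
  exact/uniq_flatten_enum/pairwise_disjoint_partition/partP.
move=> v; apply/idP/idP => _; last by rewrite mem_enum.
have : v \in cover P by rewrite (cover_partition partP) inE.
case/bigcupP => C CP vC; apply/flattenP; exists (enum C); rewrite ?mem_enum //.
by apply: map_f; rewrite mem_enum.
Qed.

Lemma gprod_partition (P : {set {set V}}) (f : V -> grass) :
  partition P [set: V] -> (forall v, even (f v)) ->
  gprod (map f (enum V)) = gprod [seq gprod (map f (enum C)) | C : {set V} <- enum P].
Proof.
move=> partP ef; rewrite (gprod_perm (s2 := map f (flatten [seq enum C | C : {set V} <- enum P]))).
- by rewrite map_flatten gprod_flatten -!map_comp.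
- by move=> _ /mapP[v _ ->].
exact/perm_map/perm_enum_partition.
Qed.

Lemma exp_factors_gprod (t : V -> R[i]) (s : seq V) :
  foldr (fun v acc => gmul (gexp (t v *: gmul (psib v) (psi v))) acc) gone s =
  gprod (map (etau t) s).
Proof. by elim: s => //= v s ->; rewrite gexp_tau1. Qed.

Lemma blockprod_gprod (P : {set {set V}}) (lam : {set V} -> R[i]) :
  blockprod P lam = gprod [seq fA (lam C) C | C : {set V} <- enum P].
Proof. by rewrite /blockprod /gprod foldr_map. Qed.

Lemma tau_partition (P : {set {set V}}) :
  partition P [set: V] -> tau [set: V] = gprod (map tau (enum P)).
Proof.
move=> partP; rewrite tau_gprod enum_setT -enumT (gprod_partition partP even_tau1).
by congr gprod; apply: eq_map => C; rewrite tau_gprod.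
Qed.

End Grassmann.

Theorem corollary5p3 (R : realType) (V : finType) (P : {set {set V}})
    (t : V -> R[i]) (lam : {set V} -> R[i]) :
  partition P [set: V] ->
  DInt t (blockprod P lam) =
  @gconst R V (\prod_(C in P) (lam C + \sum_(i in C) (t i - lam C))).
Proof.
move=> partP.
pose block (C : {set V}) := gmul (gprod (map (etau t) (enum C))) (fA (lam C) C).
have integrandE : gmul (gprod (map (etau t) (enum V))) (blockprod P lam) = gprod (map block (enum P)).
  rewrite (gprod_partition partP (even_etau (t := t))) blockprod_gprod.
  by apply: gprod_map_mul => C; apply: even_fA.
rewrite /DInt exp_factors_gprod integrandE; apply: berezin_top.
have coverP : gens (\bigcup_(C <- enum P) C) = [set: gen V].
  by rewrite big_enum -/(cover P) (cover_partition partP) gensT.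
rewrite -coverP (gprod_top_blocks (y := @tau R V)
  (a := fun C => lam C * (1 - #|C|%:R) + \sum_(i in C) t i)); last first.
- by move=> C _; split; [exact: local_etau_fA | exact: local_tau | exact: etau_fA_top].
- exact: pairwise_disjoint_partition partP.
rewrite coverP -tau_partition // big_enum; congr (_ * _); apply: eq_bigr => C _.
by rewrite sumrB sumr_const mulrBr mulr1 mulr_natr; ring.
Qed.
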